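(* $\left\|\begin{bmatrix}0&0&0&1\\0&1&1&1\\0&1&0&0\\1&1&0&0\end{bmatrix}\right\|_\bullet>\left\|\begin{bmatrix}1&1&0&0\\0&1&1&0\\0&0&1&1\\0&0&0&1\end{bmatrix}\right\|_\bullet$.
   Context: Fix $\mathbb F\in\{\mathbb R,\mathbb C\}$. For an $m\times n$ matrix $A$, the Schur norm is $\|A\|_\bullet=\sup\{\|A\bullet X\|: X\in M_{m,n}(\mathbb F),\ \|X\|\le1\}$, where $A\bullet X=[a_{ij}x_{ij}]$ is the entrywise product and $\|\cdot\|$ is the operator norm $\ell^2_n\to\ell^2_m$. *)

From HB Require Import structures.
From mathcomp Require Import all_boot all_order all_algebra.
From mathcomp Require Import classical_sets reals.
From mathcomp Require Import complex.
Set Implicit Arguments. Unset Strict Implicit. Unset Printing Implicit Defensive.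
Import Order.TTheory GRing.Theory Num.Theory.
Local Open Scope ring_scope.
Local Open Scope classical_set_scope.

(* The scalar field F is a ring K together with its absolute value
   abs : K -> R (R a real field): F = R with abs = `|.|, or F = R[i] with
   abs = normc (the complex modulus). *)

Definition vnorm (R : realType) (K : pzRingType) (abs : K -> R) (n : nat)
  (v : 'cV[K]_n) : R :=
  Num.sqrt (\sum_(i < n) abs (v i ord0) ^+ 2).

Definition opnorm (R : realType) (K : pzRingType) (abs : K -> R) (m n : nat)
  (X : 'M[K]_(m, n)) : R :=
  sup [set r : R | exists v : 'cV[K]_n, vnorm abs v <= 1 /\ r = vnorm abs (X *m v)].

Definition schur_mul (K : pzRingType) (m n : nat) (A X : 'M[K]_(m, n)) : 'M[K]_(m, n) :=
  \matrix_(i, j) (A i j * X i j).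

Definition schur_norm (R : realType) (K : pzRingType) (abs : K -> R) (m n : nat)
  (A : 'M[K]_(m, n)) : R :=
  sup [set r : R | exists X : 'M[K]_(m, n),
         opnorm abs X <= 1 /\ r = opnorm abs (schur_mul A X)].

Definition matA (K : pzRingType) : 'M[K]_4 :=
  \matrix_(i < 4, j < 4)
    (nth 0%N (nth [::] [:: [:: 0; 0; 0; 1]; [:: 0; 1; 1; 1];
                           [:: 0; 1; 0; 0]; [:: 1; 1; 0; 0]]%N i) j)%:R.

Definition matB (K : pzRingType) : 'M[K]_4 :=
  \matrix_(i < 4, j < 4)
    (nth 0%N (nth [::] [:: [:: 1; 1; 0; 0]; [:: 0; 1; 1; 0];
                           [:: 0; 0; 1; 1]; [:: 0; 0; 0; 1]]%N i) j)%:R.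

(* If A_ij = <x_i, y_j> for real vectors with |x_i|^2 <= a and |y_j|^2 <= b, then
   A • X = \sum_l diag(x_.l) X diag(y_.l), and Cauchy-Schwarz gives
   ||A||_• <= sqrt (a b).  An explicit such factorisation of B gives
   ||B||_•^2 <= 632/408 < 1.5491.  For A, the contraction X = N / sqrt 140, with N an
   integer matrix such that N^T N = 140 I, and v = (-7, 14, -7, 10) give
   ||(A • X) v||^2 / ||v||^2 = 86260 / (140 * 394) > 1.5638.  A real contraction
   stays one on C^n (it acts separately on real and imaginary parts), so the same
   witnesses work for F = R and F = C. *)

From HB Require Import structures.
From mathcomp Require Import all_boot all_order all_algebra.
From mathcomp Require Import classical_sets reals.
From mathcomp Require Import complex.
From mathcomp Require Import ring lra.
Import Order.TTheory GRing.Theory Num.Theory.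
Local Open Scope ring_scope.
Local Open Scope classical_set_scope.
Set Implicit Arguments. Unset Strict Implicit. Unset Printing Implicit Defensive.

Lemma CauchySchwarz_sum (R : realFieldType) k (a b : 'I_k -> R) :
  (\sum_l a l * b l) ^+ 2 <= (\sum_l a l ^+ 2) * (\sum_l b l ^+ 2).
Proof.
have double_sum (f g : 'I_k -> R) :
    (\sum_l f l) * (\sum_l g l) = \sum_l \sum_l' f l * g l'.
  by rewrite mulr_suml; apply: eq_bigr => l _; rewrite mulr_sumr.
have lagrange : \sum_l \sum_l' (a l * b l' - a l' * b l) ^+ 2 =
    2%:R * ((\sum_l a l ^+ 2) * (\sum_l b l ^+ 2) - (\sum_l a l * b l) ^+ 2).
  rewrite mulr2n mulrDl mul1r {2}mulrC expr2 !double_sum -sumrB exchange_big.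
  rewrite -!sumrB -big_split /=; apply: eq_bigr => l _.
  rewrite -!sumrB -big_split /=; apply: eq_bigr => l' _.
  ring.
have : 0 <= \sum_l \sum_l' (a l * b l' - a l' * b l) ^+ 2.
  by apply: sumr_ge0 => l _; apply: sumr_ge0 => l' _; apply: sqr_ge0.
by rewrite lagrange pmulr_rge0 ?ltr0n // subr_ge0.
Qed.

Lemma normK (R : realDomainType) (r : R) : `|r| ^+ 2 = r ^+ 2.
Proof. exact/real_normK/num_real. Qed.

Definition sqnormR (R : realType) n (u : 'cV[R]_n) : R := \sum_i u i ord0 ^+ 2.

Lemma sqnormRZ (R : realType) n c (u : 'cV[R]_n) :
  sqnormR (c *: u) = c ^+ 2 * sqnormR u.
Proof. by rewrite /sqnormR mulr_sumr; apply: eq_bigr => i _; rewrite mxE exprMn. Qed.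

Section Witnesses.
Variable R : realType.

Definition xB : 'M[R]_4 :=
  \matrix_(i < 4, j < 4) nth 0 (nth [::]
    [:: [:: 1 / 25%:R; - (3%:R / 115%:R); 67%:R / (25%:R * 253%:R);
            172%:R / (115%:R * 231%:R)];
        [:: 0; - (1 / 23%:R); - (1 / 46%:R); - (1 / 138%:R)];
        [:: 0; 0; - (1 / 22%:R); 3%:R / 154%:R];
        [:: 0; 0; 0; 1 / 21%:R]] i) j.

Definition yB : 'M[R]_4 :=
  \matrix_(i < 4, j < 4)
    (nth 0%Z (nth [::] [:: [:: 25; 0; 0; 0]; [:: 10; -23; 0; 0];
                           [:: -2; -12; -22; 0]; [:: 2; 3; -13; 21]]%Z i) j)%:~R.

Lemma matB_factor : matB R = xB *m yB^T.
Proof.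
apply/matrixP => i j.
case: i => [[|[|[|[|i]]]] hi] //; case: j => [[|[|[|[|j]]]] hj] //;
rewrite !mxE !big_ord_recr !big_ord0 /= !mxE /=; field => //.
Qed.

Lemma xB_rows i : \sum_l xB i l ^+ 2 <= 408%:R^-1.
Proof.
case: i => [[|[|[|[|i]]]] hi] //;
rewrite !big_ord_recr !big_ord0 /= !mxE /=; lra.
Qed.

Lemma yB_rows j : \sum_l yB j l ^+ 2 <= 632%:R.
Proof.
case: j => [[|[|[|[|j]]]] hj] //;
rewrite !big_ord_recr !big_ord0 /= !mxE /=; lra.
Qed.

Lemma matA_rows i : \sum_l matA R i l ^+ 2 <= 3%:R.
Proof.
case: i => [[|[|[|[|i]]]] hi] //;
rewrite !big_ord_recr !big_ord0 /= !mxE /=; lra.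
Qed.

Lemma identity_rows n (j : 'I_n) : \sum_l (1%:M : 'M[R]_n) j l ^+ 2 <= 1.
Proof.
rewrite (bigD1 j) //= big1 => [|l /negPf lj]; last by rewrite mxE eq_sym lj expr0n.
by rewrite mxE eqxx expr1n addr0.
Qed.

Definition NA : 'M[R]_4 :=
  \matrix_(i < 4, j < 4)
    (nth 0%Z (nth [::] [:: [:: 0; -2; 6; 10]; [:: 2; 6; -8; 6];
                           [:: 6; 8; 6; -2]; [:: -10; 6; 2; 0]]%Z i) j)%:~R.

Definition vA : 'cV[R]_4 := \col_(i < 4) (nth 0%Z [:: -7; 14; -7; 10]%Z i)%:~R.

Lemma sqnormR_NA_mul u : sqnormR (NA *m u) = 140%:R * sqnormR u.
Proof.
rewrite /sqnormR !big_ord_recr !big_ord0 /= !mxE.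
by rewrite !big_ord_recr !big_ord0 /= !mxE /=; ring.
Qed.

Lemma sqnormR_vA : sqnormR vA = 394%:R.
Proof. by rewrite /sqnormR !big_ord_recr !big_ord0 /= !mxE /=; ring. Qed.

Lemma sqnormR_schur_matA c :
  sqnormR (schur_mul (matA R) (c *: NA) *m vA) = c ^+ 2 * (20%:R * 4313%:R).
Proof.
rewrite /sqnormR !big_ord_recr !big_ord0 /= !mxE.
by rewrite !big_ord_recr !big_ord0 /= !mxE /=; ring.
Qed.

End Witnesses.

(* The scalars: a commutative ring [K] containing [R], with real and imaginary
   parts [re], [im] and modulus [abs]; instantiated by [R] itself (with [im = 0])
   and by [R[i]]. *)
Section ScalarField.
Variables (R : realType) (K : comPzRingType) (emb : {rmorphism R -> K}).
Variables (re im abs : K -> R).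
Hypotheses (reD : {morph re : a b / a + b}) (imD : {morph im : a b / a + b}).
Hypotheses (reZ : forall r z, re (emb r * z) = r * re z)
           (imZ : forall r z, im (emb r * z) = r * im z).
Hypotheses (re_emb : cancel emb re) (im_emb : forall r, im (emb r) = 0).
Hypothesis absM : {morph abs : a b / a * b}.
Hypothesis absE : forall z, abs z = Num.sqrt (re z ^+ 2 + im z ^+ 2).

Lemma re0 : re 0 = 0. Proof. by rewrite -(rmorph0 emb) re_emb. Qed.
Lemma im0 : im 0 = 0. Proof. by rewrite -(rmorph0 emb) im_emb. Qed.

Lemma re_sum (I : Type) (r : seq I) (P : pred I) (F : I -> K) :
  re (\sum_(i <- r | P i) F i) = \sum_(i <- r | P i) re (F i).
Proof. exact: (big_morph re reD re0). Qed.

Lemma im_sum (I : Type) (r : seq I) (P : pred I) (F : I -> K) :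
  im (\sum_(i <- r | P i) F i) = \sum_(i <- r | P i) im (F i).
Proof. exact: (big_morph im imD im0). Qed.

Lemma abs_ge0 z : 0 <= abs z. Proof. by rewrite absE sqrtr_ge0. Qed.

Lemma sqr_abs z : abs z ^+ 2 = re z ^+ 2 + im z ^+ 2.
Proof. by rewrite absE sqr_sqrtr // addr_ge0 ?sqr_ge0. Qed.

Lemma abs_emb r : abs (emb r) = `|r|.
Proof. by rewrite absE re_emb im_emb expr0n addr0 sqrtr_sqr. Qed.

Lemma abs0 : abs 0 = 0. Proof. by rewrite -(rmorph0 emb) abs_emb normr0. Qed.

Lemma abs_embM r z : abs (emb r * z) = `|r| * abs z.
Proof. by rewrite absM abs_emb. Qed.

Lemma absD_le a b : abs (a + b) <= abs a + abs b.
Proof.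
have [a0 b0] := (abs_ge0 a, abs_ge0 b).
rewrite -(ler_pXn2r (n := 2)) ?nnegrE ?addr_ge0 ?abs_ge0 // sqrrD !sqr_abs reD imD.
suff dot_le : re a * re b + im a * im b <= abs a * abs b by nra.
have [dot_lt0|dot_ge0] := ltrP (re a * re b + im a * im b) 0.
  by rewrite (le_trans (ltW dot_lt0)) ?mulr_ge0.
rewrite -(ler_pXn2r (n := 2)) ?nnegrE ?mulr_ge0 // exprMn !sqr_abs.
by have := sqr_ge0 (re a * im b - im a * re b); nra.
Qed.

Lemma abs_sum_le (I : Type) (r : seq I) (P : pred I) (F : I -> K) :
  abs (\sum_(i <- r | P i) F i) <= \sum_(i <- r | P i) abs (F i).
Proof.
apply: (big_rec2 (fun x y => abs y <= x)); first by rewrite abs0.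
by move=> i x y _ h; apply: le_trans (absD_le _ _) _; rewrite lerD2l.
Qed.

Definition sqnorm n (v : 'cV[K]_n) : R := \sum_i abs (v i ord0) ^+ 2.

Lemma vnormE n (v : 'cV[K]_n) : vnorm abs v = Num.sqrt (sqnorm v).
Proof. by []. Qed.

Lemma sqnorm_ge0 n (v : 'cV[K]_n) : 0 <= sqnorm v.
Proof. by apply: sumr_ge0 => i _; apply: sqr_ge0. Qed.

Lemma sqnorm0 n : sqnorm (0 : 'cV[K]_n) = 0.
Proof. by rewrite /sqnorm big1 // => i _; rewrite mxE abs0 expr0n. Qed.

Lemma vnorm0 n : vnorm abs (0 : 'cV[K]_n) = 0.
Proof. by rewrite vnormE sqnorm0 sqrtr0. Qed.

Lemma vnormZ n r (v : 'cV[K]_n) : vnorm abs (emb r *: v) = `|r| * vnorm abs v.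
Proof.
rewrite !vnormE -sqrtr_sqr -sqrtrM ?sqr_ge0 // mulr_sumr; congr Num.sqrt.
by apply: eq_bigr => i _; rewrite mxE abs_embM exprMn normK.
Qed.

Lemma vnorm_le_of_sqnorm n m (u : 'cV[K]_n) (v : 'cV[K]_m) c : 0 <= c ->
  sqnorm u <= c ^+ 2 * sqnorm v -> vnorm abs u <= c * vnorm abs v.
Proof.
move=> c0 h; rewrite !vnormE -[c in c * _]ger0_norm // -sqrtr_sqr.
rewrite -sqrtrM ?sqr_ge0 //.
by rewrite ler_sqrt // mulr_ge0 ?sqr_ge0 ?sqnorm_ge0.
Qed.

Lemma sqr_abs_le_sqnorm n (v : 'cV[K]_n) j : abs (v j ord0) ^+ 2 <= sqnorm v.
Proof. by rewrite /sqnorm (bigD1 j) //= lerDl sumr_ge0 // => i _; apply: sqr_ge0. Qed.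

Lemma sqnorm_mul_bounded m n (M : 'M[K]_(m, n)) :
  exists2 C, 0 <= C & forall v, sqnorm (M *m v) <= C * sqnorm v.
Proof.
exists (\sum_i (\sum_j abs (M i j)) ^+ 2).
  by apply: sumr_ge0 => i _; apply: sqr_ge0.
move=> v; rewrite /sqnorm mulr_suml; apply: ler_sum => i _; rewrite mxE.
have entry_le : abs (\sum_j M i j * v j ord0) <= (\sum_j abs (M i j)) * vnorm abs v.
  apply: le_trans (abs_sum_le _ _ _) _; rewrite mulr_suml; apply: ler_sum => j _.
  rewrite absM ler_wpM2l ?abs_ge0 // vnormE -[abs _]ger0_norm ?abs_ge0 //.
  by rewrite -sqrtr_sqr ler_sqrt ?sqnorm_ge0 ?sqr_abs_le_sqnorm.
apply: le_trans (_ : _ <= ((\sum_j abs (M i j)) * vnorm abs v) ^+ 2) _.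
  by rewrite ler_pXn2r ?nnegrE ?abs_ge0 // (le_trans (abs_ge0 _) entry_le).
by rewrite exprMn vnormE sqr_sqrtr ?sqnorm_ge0.
Qed.

Lemma sqnorm_le_of_vnorm n m (u : 'cV[K]_n) (v : 'cV[K]_m) c : 0 <= c ->
  vnorm abs u <= c * vnorm abs v -> sqnorm u <= c ^+ 2 * sqnorm v.
Proof.
move=> c0; rewrite !vnormE -ler_sqr ?nnegrE ?mulr_ge0 ?sqrtr_ge0 //.
by rewrite exprMn !sqr_sqrtr ?sqnorm_ge0.
Qed.

Lemma opnorm_le m n (M : 'M[K]_(m, n)) c : 0 <= c ->
  (forall v, sqnorm (M *m v) <= c ^+ 2 * sqnorm v) -> opnorm abs M <= c.
Proof.
move=> c0 Mc; apply: ge_sup; first by exists (vnorm abs (M *m 0)), 0; rewrite vnorm0.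
move=> _ [v [v1 ->]]; apply: le_trans (vnorm_le_of_sqnorm c0 (Mc v)) _.
by rewrite ler_piMr.
Qed.

Lemma opnorm_set_hasub m n (M : 'M[K]_(m, n)) :
  has_ubound [set r : R | exists v : 'cV[K]_n,
                vnorm abs v <= 1 /\ r = vnorm abs (M *m v)].
Proof.
have [C C0 MC] := sqnorm_mul_bounded M.
exists (Num.sqrt C) => _ [v [v1 ->]].
apply: le_trans (vnorm_le_of_sqnorm (sqrtr_ge0 C) _) _; first by rewrite sqr_sqrtr.
by rewrite ler_piMr ?sqrtr_ge0.
Qed.

Lemma opnorm_ge0 m n (M : 'M[K]_(m, n)) : 0 <= opnorm abs M.
Proof.
by apply: (ub_le_sup (opnorm_set_hasub M)); exists 0; split; rewrite ?mulmx0 vnorm0.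
Qed.

Lemma vnorm_mul_le m n (M : 'M[K]_(m, n)) v :
  vnorm abs (M *m v) <= opnorm abs M * vnorm abs v.
Proof.
have [v0|v_neq0] := eqVneq (sqnorm v) 0.
  have [C _ MC] := sqnorm_mul_bounded M.
  have Mv0 : sqnorm (M *m v) = 0.
    by apply/eqP; rewrite eq_le sqnorm_ge0 andbT -(mulr0 C) -v0 MC.
  by rewrite !vnormE Mv0 v0 sqrtr0 mulr0.
have v_gt0 : 0 < vnorm abs v by rewrite vnormE sqrtr_gt0 lt_def v_neq0 sqnorm_ge0.
have inv_v : `|(vnorm abs v)^-1| = (vnorm abs v)^-1.
  by rewrite ger0_norm ?invr_ge0 ?ltW.
have unit_le : vnorm abs (M *m (emb (vnorm abs v)^-1 *: v)) <= opnorm abs M.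
  apply: (ub_le_sup (opnorm_set_hasub M)); exists (emb (vnorm abs v)^-1 *: v).
  by rewrite vnormZ inv_v mulVf ?gt_eqF.
rewrite -scalemxAr vnormZ inv_v in unit_le.
by rewrite -ler_pdivrMr // mulrC.
Qed.

Lemma sqnorm_mul_le m n (M : 'M[K]_(m, n)) v :
  sqnorm (M *m v) <= opnorm abs M ^+ 2 * sqnorm v.
Proof. exact/sqnorm_le_of_vnorm/vnorm_mul_le/opnorm_ge0. Qed.

Section Factorization.
Variables (m n k : nat) (x : 'M[R]_(m, k)) (y : 'M[R]_(n, k)) (al be : R).
Hypotheses (x_rows : forall i, \sum_l x i l ^+ 2 <= al)
           (y_rows : forall j, \sum_l y j l ^+ 2 <= be).
Hypotheses (al_ge0 : 0 <= al) (be_ge0 : 0 <= be).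

Let A : 'M[K]_(m, n) := map_mx emb (x *m y^T).

Definition diagmul (l : 'I_k) (v : 'cV[K]_n) : 'cV[K]_n :=
  \col_j (emb (y j l) * v j ord0).

Lemma schur_mul_factorE (X : 'M[K]_(m, n)) v i :
  (schur_mul A X *m v) i ord0 = \sum_l emb (x i l) * (X *m diagmul l v) i ord0.
Proof.
rewrite mxE; under eq_bigr do rewrite !mxE rmorph_sum !mulr_suml.
rewrite exchange_big /=; apply: eq_bigr => l _; rewrite mxE mulr_sumr.
by apply: eq_bigr => j _; rewrite !mxE rmorphM; ring.
Qed.

Lemma sqr_abs_schur_mul_le X v i :
  abs ((schur_mul A X *m v) i ord0) ^+ 2
    <= al * \sum_l abs ((X *m diagmul l v) i ord0) ^+ 2.
Proof.
set z := fun l => abs ((X *m diagmul l v) i ord0).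
have entry_le : abs ((schur_mul A X *m v) i ord0) <= \sum_l `|x i l| * z l.
  rewrite schur_mul_factorE; apply: le_trans (abs_sum_le _ _ _) _.
  by apply: ler_sum => l _; rewrite abs_embM.
have sqr_entry_le : abs ((schur_mul A X *m v) i ord0) ^+ 2
    <= (\sum_l `|x i l| * z l) ^+ 2.
  by rewrite ler_pXn2r ?nnegrE ?abs_ge0 // (le_trans (abs_ge0 _) entry_le).
apply: le_trans sqr_entry_le (le_trans (CauchySchwarz_sum _ _) _).
have z_ge0 : 0 <= \sum_l z l ^+ 2 by apply: sumr_ge0 => l _; apply: sqr_ge0.
by rewrite ler_wpM2r //; under eq_bigr do rewrite normK.
Qed.

Lemma sum_sqnorm_diagmul_le v : \sum_l sqnorm (diagmul l v) <= be * sqnorm v.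
Proof.
rewrite /sqnorm exchange_big /= mulr_sumr; apply: ler_sum => j _.
under eq_bigr do rewrite mxE abs_embM exprMn normK.
by rewrite -mulr_suml ler_wpM2r ?sqr_ge0.
Qed.

Lemma sqnorm_schur_mul_le X v :
  sqnorm (schur_mul A X *m v) <= al * be * opnorm abs X ^+ 2 * sqnorm v.
Proof.
apply: le_trans (ler_sum _ (fun i _ => sqr_abs_schur_mul_le X v i)) _.
rewrite -mulr_sumr exchange_big /= -[al * be * _ * _]mulrA -mulrA ler_wpM2l //.
apply: le_trans (ler_sum _ (fun l _ => sqnorm_mul_le X (diagmul l v))) _.
rewrite -mulr_sumr mulrCA ler_wpM2l ?sqr_ge0 //.
exact: sum_sqnorm_diagmul_le.
Qed.

Lemma schur_set_ub :
  ubound [set r : R | exists X : 'M[K]_(m, n),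
            opnorm abs X <= 1 /\ r = opnorm abs (schur_mul A X)] (Num.sqrt (al * be)).
Proof.
move=> _ [X [X1 ->]]; apply: opnorm_le; first exact: sqrtr_ge0.
move=> v; rewrite sqr_sqrtr ?mulr_ge0 //.
apply: le_trans (sqnorm_schur_mul_le X v) _.
rewrite -mulrA ler_wpM2l ?mulr_ge0 // ler_piMl ?sqnorm_ge0 //.
by rewrite expr_le1 ?opnorm_ge0.
Qed.

Lemma schur_norm_le : schur_norm abs A <= Num.sqrt (al * be).
Proof.
apply: ge_sup schur_set_ub; exists (opnorm abs (schur_mul A 0)), 0; split => //.
apply: opnorm_le => // v.
by rewrite mul0mx sqnorm0 mulr_ge0 ?sqr_ge0 ?sqnorm_ge0.
Qed.

Lemma vnorm_schur_mul_le X v : opnorm abs X <= 1 ->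
  vnorm abs (schur_mul A X *m v) <= schur_norm abs A * vnorm abs v.
Proof.
move=> X1; apply: le_trans (vnorm_mul_le _ v) _.
rewrite ler_wpM2r ?sqrtr_ge0 //.
by apply: (ub_le_sup (ex_intro _ _ schur_set_ub)); exists X.
Qed.

End Factorization.

Lemma sqnorm_map n (u : 'cV[R]_n) : sqnorm (map_mx emb u) = sqnormR u.
Proof. by apply: eq_bigr => i _; rewrite mxE abs_emb normK. Qed.

Lemma sqnorm_reim n (v : 'cV[K]_n) :
  sqnorm v = sqnormR (map_mx re v) + sqnormR (map_mx im v).
Proof.
by rewrite /sqnorm /sqnormR -big_split; apply: eq_bigr => i _; rewrite sqr_abs !mxE.
Qed.

Lemma map_re_mul m n (M : 'M[R]_(m, n)) (v : 'cV[K]_n) :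
  map_mx re (map_mx emb M *m v) = M *m map_mx re v.
Proof.
apply/matrixP => i j; rewrite !mxE re_sum.
by apply: eq_bigr => l _; rewrite !mxE reZ.
Qed.

Lemma map_im_mul m n (M : 'M[R]_(m, n)) (v : 'cV[K]_n) :
  map_mx im (map_mx emb M *m v) = M *m map_mx im v.
Proof.
apply/matrixP => i j; rewrite !mxE im_sum.
by apply: eq_bigr => l _; rewrite !mxE imZ.
Qed.

Lemma opnorm_map_le1 m n (M : 'M[R]_(m, n)) :
  (forall u, sqnormR (M *m u) <= sqnormR u) -> opnorm abs (map_mx emb M) <= 1.
Proof.
move=> M1; apply: opnorm_le => // v.
by rewrite expr1n mul1r !sqnorm_reim map_re_mul map_im_mul lerD.
Qed.

Lemma map_schur_mul m n (M N : 'M[R]_(m, n)) :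
  map_mx emb (schur_mul M N) = schur_mul (map_mx emb M) (map_mx emb N).
Proof. by apply/matrixP => i j; rewrite !mxE rmorphM. Qed.

Lemma map_matA : map_mx emb (matA R) = matA K.
Proof. by apply/matrixP => i j; rewrite !mxE rmorph_nat. Qed.

Lemma map_matB : map_mx emb (matB R) = matB K.
Proof. by apply/matrixP => i j; rewrite !mxE rmorph_nat. Qed.

Theorem schur_norm_matB_lt_matA : schur_norm abs (matB K) < schur_norm abs (matA K).
Proof.
have B_le : schur_norm abs (matB K) <= Num.sqrt (408%:R^-1 * 632%:R).
  rewrite -map_matB matB_factor.
  by apply: schur_norm_le (@xB_rows R) (@yB_rows R) _ _; rewrite ?invr_ge0 ler0n.
pose c : R := (Num.sqrt 140%:R)^-1.
have c2 : c ^+ 2 = 140%:R^-1 by rewrite exprVn sqr_sqrtr ?ler0n.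
have X1 : opnorm abs (map_mx emb (c *: NA R)) <= 1.
  apply: opnorm_map_le1 => u.
  by rewrite -scalemxAl sqnormRZ sqnormR_NA_mul c2 mulrA mulVf ?pnatr_eq0 ?mul1r.
have := vnorm_schur_mul_le (matA_rows R) (@identity_rows R 4) (ler0n _ 3) ler01
          (map_mx emb (vA R)) X1.
rewrite trmx1 mulmx1 -map_schur_mul -map_mxM map_matA !vnormE !sqnorm_map.
rewrite sqnormR_schur_matA sqnormR_vA c2 => A_ge.
rewrite ltNge; apply/negP => A_le.
have := le_trans A_ge (ler_wpM2r (sqrtr_ge0 _) (le_trans A_le B_le)).
rewrite -sqrtrM ?mulr_ge0 ?invr_ge0 ?ler0n // ler_sqrt ?mulr_ge0 ?invr_ge0 ?ler0n //.
lra.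
Qed.

End ScalarField.

Lemma schur_norm_matB_lt_matA_real (R : realType) :
  schur_norm (fun x : R => `|x|) (matB R) < schur_norm (fun x : R => `|x|) (matA R).
Proof.
apply: (@schur_norm_matB_lt_matA R R idfun id (fun _ => 0)) => //.
- by move=> a b; rewrite addr0.
- by move=> r z; rewrite mulr0.
- exact: normrM.
- by move=> z; rewrite expr0n addr0 sqrtr_sqr.
Qed.

Lemma schur_norm_matB_lt_matA_complex (R : realType) :
  schur_norm (@Normc.normc R) (matB R[i]) < schur_norm (@Normc.normc R) (matA R[i]).
Proof.
apply: (@schur_norm_matB_lt_matA R R[i] (real_complex R) (@complex.Re R) (@complex.Im R)).
- by case=> a b [c d].
- by case=> a b [c d].
- by move=> r [a b] /=; ring.
- by move=> r [a b] /=; ring.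
- by [].
- by [].
- exact: Normc.normcM.
- by case.
Qed.

Theorem proposition5p7 (R : realType) :
  schur_norm (fun x : R => `|x|) (matA R) > schur_norm (fun x : R => `|x|) (matB R)
  /\
  schur_norm (@Normc.normc R) (matA R[i]) > schur_norm (@Normc.normc R) (matB R[i]).
Proof.
by split; [exact: schur_norm_matB_lt_matA_real | exact: schur_norm_matB_lt_matA_complex].
Qed.
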